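(* Let $\mathbf{x}_1,\ldots,\mathbf{x}_n\in\mathbb{S}^{d-1}$ be distinct. Then the matrix $\mathbf{H}^\infty\in\mathbb{R}^{n\times n}$ with entries $$H^\infty_{ij}=\frac{(\mathbf{x}_i^\top\mathbf{x}_j+1)\,(\pi-\arccos(\mathbf{x}_i^\top\mathbf{x}_j))}{4\pi}$$ is symmetric and positive definite.
   Context: $d\ge 2$ and $\mathbb{S}^{d-1}\subset\mathbb{R}^d$ is the unit sphere. Equivalently, $H^\infty_{ij}=\mathbb{E}_{\mathbf{w}\sim\mathcal{N}(\mathbf{0},\kappa^2\mathbf{I})}\big[\tfrac{\mathbf{x}_i^\top\mathbf{x}_j+1}{2}\,\mathbb{I}_{\{\mathbf{w}^\top\mathbf{x}_i\ge 0,\ \mathbf{w}^\top\mathbf{x}_j\ge 0\}}\big]$ for any $\kappa>0$. No assumption is made excluding antipodal pairs $\mathbf{x}_i=-\mathbf{x}_j$. *)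

From mathcomp Require Import all_boot all_order all_algebra.
From mathcomp Require Import all_classical all_reals all_analysis.
Set Implicit Arguments. Unset Strict Implicit. Unset Printing Implicit Defensive.
Import Order.TTheory GRing.Theory Num.Theory.
Local Open Scope ring_scope.

Definition dotv (R : realType) (d : nat) (u v : 'rV[R]_d) : R :=
  \sum_(k < d) u 0 k * v 0 k.

Definition on_sphere (R : realType) (d : nat) (u : 'rV[R]_d) : Prop :=
  dotv u u = 1.

Definition Hinf (R : realType) (n d : nat) (x : 'I_n -> 'rV[R]_d) : 'M[R]_n :=
  \matrix_(i < n, j < n)
    ((dotv (x i) (x j) + 1) * (pi - acos (dotv (x i) (x j))) / (4 * pi)).

Definition symmetric_mx (R : realType) (n : nat) (A : 'M[R]_n) : Prop :=
  A^T = A.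

Definition posdef_mx (R : realType) (n : nat) (A : 'M[R]_n) : Prop :=
  forall v : 'cV[R]_n, v != 0 -> 0 < (v^T *m A *m v) 0 0.

From mathcomp Require Import all_boot all_order all_algebra.
From mathcomp Require Import all_classical all_reals all_analysis.
From mathcomp Require Import ring lra zify.
Import Order.TTheory GRing.Theory Num.Theory.
Local Open Scope ring_scope.
Set Implicit Arguments. Unset Strict Implicit.

(* With [t = <x_i, x_j>] the entries are [(t + 1) (pi - acos t) / (4 pi)], and
   [pi - acos t = pi/2 + asin t = pi/2 + sum_m c_m t^(2m+1)] with all [c_m > 0].
   Hence [4 pi H] is formally [pi/2 (G^(0) + G^(1)) + sum_m c_m (G^(2m+1) + G^(2m+2))],
   [G^(k)] being the [k]-th Hadamard power of the Gram matrix [G].  Each [G^(k)] is the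
   Gram matrix of the [k]-fold tensor powers of the [x_i], so it is positive semidefinite;
   and for [w != 0] some [w^T G^(k) w] with [k >= 1] is positive, since distinct unit
   vectors have [<x_j, x_i> <> 1 = <x_j, x_j>].  The series is truncated instead of
   summed: the remainder is nonnegative at [t = 1], is killed by the factor [t + 1] at
   [t = -1], and is [O(M r^(2M-1))] on the finitely many other values, all in [[-r, r]]
   for some [r < 1]. *)

Lemma quad_form_gram (R : comNzRingType) (F : finType) n (w : 'I_n -> R)
    (psi : 'I_n -> F -> R) :
  \sum_i \sum_j w i * w j * (\sum_f psi i f * psi j f) =
  \sum_f (\sum_i w i * psi i f) ^+ 2.
Proof.
under eq_bigr do under eq_bigr do rewrite mulr_sumr.
under eq_bigr do rewrite exchange_big /=.
rewrite exchange_big /=; apply: eq_bigr => f _.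
by rewrite expr2 big_distrlr /=; apply: eq_bigr => i _; apply: eq_bigr => j _; ring.
Qed.

Lemma gram_kernel (R : realDomainType) (F : finType) n (w : 'I_n -> R)
    (psi : 'I_n -> F -> R) :
  \sum_f (\sum_i w i * psi i f) ^+ 2 = 0 ->
  forall j, \sum_i w i * (\sum_f psi j f * psi i f) = 0.
Proof.
move=> sum_sq0 j.
have comb0 f : \sum_i w i * psi i f = 0.
  apply/eqP; rewrite -sqrf_eq0; apply/eqP.
  by apply: (psumr_eq0P _ sum_sq0) => // g _; exact: sqr_ge0.
under eq_bigr do rewrite mulr_sumr.
rewrite exchange_big /= big1 // => f _.
rewrite (eq_bigr (fun i => psi j f * (w i * psi i f))); last by move=> i _; exact: mulrCA.
by rewrite -mulr_sumr comb0 mulr0.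
Qed.

(* Pair the power sums with the coefficients of [X * prod_(i != j) (X - s i)]:
   it has no constant term and vanishes at every [s i] except [s j]. *)
Lemma power_sums_eq0 (R : idomainType) n (s w : 'I_n -> R) (j : 'I_n) :
  s j != 0 -> (forall i, i != j -> s i != s j) ->
  (forall k, (0 < k)%N -> \sum_i w i * s i ^+ k = 0) -> w j = 0.
Proof.
move=> sj0 s_inj pow_sums0.
pose p : {poly R} := 'X * \prod_(i | i != j) ('X - (s i)%:P).
have sum_p : \sum_i w i * p.[s i] = 0.
  under eq_bigr do rewrite horner_coef mulr_sumr.
  rewrite exchange_big /= big1 // => k _.
  have [->|k_gt0] := posnP k.
    by rewrite big1 // => i _; rewrite coefXM /= mul0r mulr0.
  rewrite (eq_bigr (fun i => p`_k * (w i * s i ^+ k))); last by move=> i _; exact: mulrCA.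
  by rewrite -mulr_sumr pow_sums0 // mulr0.
have p_other i : i != j -> p.[s i] = 0.
  move=> ij; rewrite hornerM horner_prod (bigD1 i) //= hornerXsubC subrr.
  by rewrite mul0r mulr0.
have p_j : p.[s j] != 0.
  rewrite hornerM hornerX horner_prod mulf_neq0 //; apply/prodf_neq0 => i ij.
  by rewrite hornerXsubC subr_eq0 eq_sym s_inj.
move: sum_p; rewrite (bigD1 j) //= big1 ?addr0 => [/eqP|i ij]; last by rewrite p_other ?mulr0.
by rewrite mulf_eq0 (negPf p_j) orbF => /eqP.
Qed.

Section Gram.
Variable R : realType.

Lemma dotvC d (u v : 'rV[R]_d) : dotv u v = dotv v u.
Proof. by apply: eq_bigr => k _; rewrite mulrC. Qed.

Lemma dotvX d (u v : 'rV[R]_d) k :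
  dotv u v ^+ k =
  \sum_(f : {ffun 'I_k -> 'I_d}) (\prod_l u 0 (f l)) * (\prod_l v 0 (f l)).
Proof.
rewrite -[k in LHS]card_ord -prodr_const /dotv bigA_distr_bigA /=.
by apply: eq_bigr => f _; rewrite -big_split.
Qed.

Definition gram_pow_form n d (x : 'I_n -> 'rV[R]_d) (w : 'I_n -> R) (k : nat) : R :=
  \sum_i \sum_j w i * w j * dotv (x i) (x j) ^+ k.

Lemma gram_pow_formE n d (x : 'I_n -> 'rV[R]_d) w k :
  gram_pow_form x w k =
  \sum_(f : {ffun 'I_k -> 'I_d}) (\sum_i w i * \prod_l x i 0 (f l)) ^+ 2.
Proof.
rewrite -quad_form_gram; apply: eq_bigr => i _; apply: eq_bigr => j _.
by rewrite dotvX.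
Qed.

Lemma gram_pow_form_ge0 n d (x : 'I_n -> 'rV[R]_d) w k : 0 <= gram_pow_form x w k.
Proof. by rewrite gram_pow_formE sumr_ge0 // => f _; exact: sqr_ge0. Qed.

Lemma gram_pow_form_eq0 n d (x : 'I_n -> 'rV[R]_d) w k : gram_pow_form x w k = 0 ->
  forall j, \sum_i w i * dotv (x j) (x i) ^+ k = 0.
Proof.
rewrite gram_pow_formE => /gram_kernel ker j; apply: etrans (ker j).
by apply: eq_bigr => i _; rewrite dotvX.
Qed.

Lemma dotv_normD d (u v : 'rV[R]_d) (s : R) :
  \sum_k (u 0 k + s * v 0 k) ^+ 2 = dotv u u + s ^+ 2 * dotv v v + 2 * s * dotv u v.
Proof. by rewrite /dotv !mulr_sumr -!big_split /=; apply: eq_bigr => k _; ring. Qed.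

Lemma sphere_dotv_bound d (u v : 'rV[R]_d) :
  on_sphere u -> on_sphere v -> -1 <= dotv u v <= 1.
Proof.
move=> hu hv; have := dotv_normD u v 1; have := dotv_normD u v (-1).
rewrite hu hv => minus plus.
have sq_ge0 s : 0 <= \sum_k (u 0 k + s * v 0 k) ^+ 2.
  by apply: sumr_ge0 => k _; exact: sqr_ge0.
have := sq_ge0 1; have := sq_ge0 (-1); rewrite minus plus => ? ?.
by apply/andP; split; nra.
Qed.

Lemma sphere_dotv_eq1 d (u v : 'rV[R]_d) :
  on_sphere u -> on_sphere v -> dotv u v = 1 -> u = v.
Proof.
move=> hu hv uv1; have := dotv_normD u v (-1); rewrite hu hv uv1.
have -> : 1 + (-1) ^+ 2 * 1 + 2 * -1 * 1 = 0 :> R by ring.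
move=> sum_sq0; apply/matrixP => a k; rewrite (ord1 a).
have /eqP := psumr_eq0P (fun k _ => sqr_ge0 (u 0 k + -1 * v 0 k)) sum_sq0 (i := k) isT.
by rewrite sqrf_eq0 mulN1r subr_eq0 => /eqP.
Qed.

Lemma quad_formE n (A : 'M[R]_n) (v : 'cV[R]_n) :
  (v^T *m A *m v) 0 0 = \sum_i \sum_j v i 0 * v j 0 * A i j.
Proof.
rewrite mxE exchange_big /=; apply: eq_bigr => j _.
by rewrite mxE mulr_suml; apply: eq_bigr => i _; rewrite !mxE; ring.
Qed.

End Gram.

Section ArcsinTaylor.
Variable R : realType.

(* ['C(2m, m) / 4^m], the coefficient of [t^(2m)] in [(1 - t^2)^(-1/2)]. *)
Fixpoint central_binom_scaled (m : nat) : R :=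
  if m is m'.+1 then central_binom_scaled m' * (m'.*2.+1)%:R / (m'.*2.+2)%:R
  else 1.

Definition asin_coef (m : nat) : R := central_binom_scaled m / (m.*2.+1)%:R.

Definition asin_poly (M : nat) (t : R) : R :=
  \sum_(m < M) asin_coef m * t ^+ m.*2.+1.

(* [pi/2 - acos t = asin t], so this is the Taylor remainder of [asin]. *)
Definition asin_rem (M : nat) (t : R) : R := pi / 2 - acos t - asin_poly M t.

(* Minus the derivative of [x |-> asin_poly M (cos x)]: a partial sum of the
   series of [sin x / sqrt (1 - cos x ^ 2)], which is [1] on [[0, pi]]. *)
Definition asin_slope (M : nat) (x : R) : R :=
  \sum_(m < M) central_binom_scaled m * (sin x * cos x ^+ m.*2).

Lemma central_binom_scaled_gt0 m : 0 < central_binom_scaled m.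
Proof. by elim: m => [|m IH] //=; rewrite divr_gt0 ?mulr_gt0 ?ltr0n. Qed.

Lemma central_binom_scaled_le1 m : central_binom_scaled m <= 1.
Proof.
elim: m => [|m IH] //=; rewrite -mulrA (le_trans _ IH) //.
rewrite ler_piMr ?(ltW (central_binom_scaled_gt0 m)) //.
by rewrite ler_pdivrMr ?ltr0n // mul1r ler_nat.
Qed.

Lemma asin_coef_gt0 m : 0 < asin_coef m.
Proof. by rewrite divr_gt0 ?central_binom_scaled_gt0 ?ltr0n. Qed.

Lemma is_derive_sin_cosX (c : R) (k : nat) (x : R) :
  is_derive x 1 (fun y => c * (sin y * cos y ^+ k))
    (c * (cos x ^+ k.+1 - k%:R * (1 - cos x ^+ 2) * cos x ^+ k.-1)).
Proof.
have -> : (fun y => c * (sin y * cos y ^+ k)) = c *: (sin * cos ^+ k).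
  by rewrite scalrfctE mulrfctE exprfctE.
apply: is_derive_eq; rewrite /= -(sin2cos2 x) exprfctE /GRing.scale /=.
case: k => [|k] /=; first by rewrite expr0 expr1; ring.
by rewrite exprS [cos x ^+ k.+2]exprS exprS; ring.
Qed.

Lemma is_derive_cosX (c : R) (k : nat) (x : R) :
  is_derive x 1 (fun y => c * cos y ^+ k.+1)
    (- (c * k.+1%:R * (sin x * cos x ^+ k))).
Proof.
have -> : (fun y => c * cos y ^+ k.+1) = c *: cos ^+ k.+1.
  by rewrite scalrfctE exprfctE.
by apply: is_derive_eq; rewrite /= /GRing.scale /=; ring.
Qed.

Lemma is_derive_asin_slope (M : nat) (x : R) :
  is_derive x 1 (asin_slope M)
    ((M.*2)%:R * central_binom_scaled M * cos x ^+ (M.*2).-1).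
Proof.
elim: M => [|M IH].
  have -> : asin_slope 0 = cst 0 by apply/funext => y; rewrite /asin_slope big_ord0.
  by apply: is_derive_eq; rewrite !mul0r.
have -> : asin_slope M.+1 =
    asin_slope M + (fun y => central_binom_scaled M * (sin y * cos y ^+ M.*2)).
  by apply/funext => y; rewrite /asin_slope big_ord_recr.
apply: (is_derive_eq (is_deriveD IH (is_derive_sin_cosX _ _ _))).
case: M {IH} => [|M] /=; first by rewrite ?doubleS ?double0 ?expr0 ?expr1 /=; field.
have hM : 0 <= (M.*2)%:R :> R by [].
rewrite !doubleS !exprS !mulrS; field; apply/andP; split; apply: lt0r_neq0; lra.
Qed.

Lemma is_derive_asin_poly_cos (M : nat) (x : R) :
  is_derive x 1 (fun y => asin_poly M (cos y)) (- asin_slope M x).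
Proof.
elim: M => [|M IH].
  have -> : (fun y => asin_poly 0 (cos y)) = cst 0.
    by apply/funext => y; rewrite /asin_poly big_ord0.
  by apply: is_derive_eq; rewrite /asin_slope big_ord0 oppr0.
have -> : (fun y => asin_poly M.+1 (cos y)) =
    (fun y => asin_poly M (cos y)) + (fun y => asin_coef M * cos y ^+ M.*2.+1).
  by apply/funext => y; rewrite /asin_poly big_ord_recr.
apply: (is_derive_eq (is_deriveD IH (is_derive_cosX _ _ _))).
rewrite /asin_slope big_ord_recr /= /asin_coef opprD; congr (_ - _).
have hM : 0 <= (M.*2)%:R :> R by [].
by field; apply: lt0r_neq0; lra.
Qed.

Lemma MVT_is_derive (f df : R -> R) (a b : R) : a <= b ->
  (forall x : R, is_derive x 1 f (df x)) ->
  exists2 c, a <= c <= b & f b - f a = df c * (b - a).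
Proof.
move=> ab f_df; have [|c] := @MVT_segment R f df a b ab (fun x _ => f_df x).
  by apply: derivable_within_continuous => y _; case: (f_df y).
by rewrite in_itv; exists c.
Qed.

Lemma pihalf_ge0 : 0 <= pi / 2 :> R.
Proof. by rewrite divr_ge0 // ltW // pi_gt0. Qed.

Lemma pihalf_le_pi : pi / 2 <= pi :> R.
Proof. by have := @pi_gt0 R; lra. Qed.

Lemma ler_cos : {in `[0, pi] &, {mono (@cos R) : x y /~ y <= x}}.
Proof. by move=> x y hx hy; rewrite !leNgt ltr_cos. Qed.

Lemma cos_le_cos (x y : R) : 0 <= x -> x <= y -> y <= pi -> cos y <= cos x.
Proof.
move=> x0 xy ypi.
by rewrite ler_cos // in_itv /= ?x0 ?ypi ?(le_trans x0 xy) ?(le_trans xy ypi).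
Qed.

Lemma acos_le_pihalf (t : R) : 0 <= t <= 1 -> acos t <= pi / 2.
Proof.
move=> /andP[t0 t1]; have t_itv : t \in `[-1, 1] by rewrite in_itv /= t1 andbT; lra.
rewrite -ler_cos ?in_itv /= ?acos_ge0 ?acos_lepi ?pihalf_ge0 ?pihalf_le_pi //.
  by rewrite acosK // cos_pihalf.
all: lra.
Qed.

Lemma asin_slope_pihalf (M : nat) : (0 < M)%N -> asin_slope M (pi / 2) = 1.
Proof.
case: M => // M _; rewrite /asin_slope big_ord_recl sin_pihalf cos_pihalf /=.
rewrite expr0 !mulr1 big1 ?addr0 // => i _.
by rewrite /bump /= doubleS expr0n /= !mulr0.
Qed.

Lemma asin_slope_gap (M : nat) (x r : R) : (0 < M)%N -> 0 <= x <= pi / 2 ->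
  cos x <= r -> 0 <= 1 - asin_slope M x <= (M.*2)%:R * r ^+ (M.*2).-1 * (pi / 2).
Proof.
move=> M0 /andP[x0 xp] cos_x_r.
have [c /andP[xc cp]] := MVT_is_derive xp (is_derive_asin_slope M).
rewrite asin_slope_pihalf // => ->.
have cos_c0 : 0 <= cos c.
  by apply: cos_ge0_pihalf; rewrite cp andbT; have := pihalf_ge0; lra.
have cos_c_r : cos c <= r.
  by apply: le_trans cos_x_r; rewrite cos_le_cos // (le_trans cp) ?pihalf_le_pi.
have c_M_ge0 : 0 <= central_binom_scaled M := ltW (central_binom_scaled_gt0 M).
apply/andP; split; first by rewrite !mulr_ge0 ?exprn_ge0 ?subr_ge0.
apply: ler_pM; rewrite ?mulr_ge0 ?exprn_ge0 ?subr_ge0 //; last by lra.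
rewrite -mulrA ler_wpM2l // -[r ^+ _]mul1r.
by apply: ler_pM; rewrite ?exprn_ge0 ?central_binom_scaled_le1 ?lerXn2r ?nnegrE //;
  exact: le_trans cos_c_r.
Qed.

Lemma asin_poly0 (M : nat) : asin_poly M 0 = 0.
Proof. by rewrite /asin_poly big1 // => m _; rewrite expr0n mulr0. Qed.

Lemma asin_polyN (M : nat) (t : R) : asin_poly M (- t) = - asin_poly M t.
Proof.
rewrite /asin_poly -sumrN; apply: eq_bigr => m _.
by rewrite exprNn -signr_odd /= odd_double /= expr1 mulN1r mulrN.
Qed.

Lemma asin_remN (M : nat) (t : R) : -1 <= t <= 1 -> asin_rem M (- t) = - asin_rem M t.
Proof. by move=> t_itv; rewrite /asin_rem acosN // asin_polyN; lra. Qed.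

Lemma asin_rem_cos (M : nat) (x : R) : 0 <= x <= pi ->
  asin_rem M (cos x) = pi / 2 - x - asin_poly M (cos x).
Proof. by move=> x_itv; rewrite /asin_rem cosK // in_itv. Qed.

Lemma asin_rem_cos_bounds (M : nat) (x r : R) : (0 < M)%N -> 0 <= x <= pi / 2 ->
  cos x <= r -> 0 <= asin_rem M (cos x) <= (M.*2)%:R * r ^+ (M.*2).-1 * (pi / 2) ^+ 2.
Proof.
move=> M0 /andP[x0 xp] cos_x_r.
rewrite asin_rem_cos; last by rewrite x0 (le_trans xp) ?pihalf_le_pi.
pose g : R -> R := cst (pi / 2) - id - (fun y => asin_poly M (cos y)).
have g_der (y : R) : is_derive y 1 g (asin_slope M y - 1).
  apply: (is_derive_eq (is_deriveB (is_deriveB (is_derive_cst (pi / 2) y 1)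
    (is_derive_id y 1)) (is_derive_asin_poly_cos M y))); ring.
have [c /andP[xc cp]] := MVT_is_derive xp g_der.
rewrite /g !fctE /= cos_pihalf asin_poly0 => g_mvt.
have -> : pi / 2 - x - asin_poly M (cos x) = (1 - asin_slope M c) * (pi / 2 - x).
  by move: g_mvt; rewrite /=; lra.
have cos_c_r : cos c <= r.
  by apply: le_trans cos_x_r; rewrite cos_le_cos // (le_trans cp) ?pihalf_le_pi.
have c_itv : 0 <= c <= pi / 2 by rewrite cp (le_trans x0 xc).
have /andP[gap0 gap] := asin_slope_gap M0 c_itv cos_c_r.
apply/andP; split; first by rewrite mulr_ge0 // subr_ge0.
rewrite expr2 mulrA; apply: ler_pM; rewrite ?subr_ge0 //; lra.
Qed.

Lemma asin_rem1_ge0 (M : nat) : (0 < M)%N -> 0 <= asin_rem M 1.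
Proof.
move=> M0; have := @asin_rem_cos_bounds M 0 1 M0.
by rewrite lexx pihalf_ge0 cos0 lexx => /(_ isT isT) /andP[].
Qed.

Lemma asin_rem_bound (M : nat) (t r : R) : (0 < M)%N -> -1 <= t <= 1 ->
  `|t| <= r -> `|asin_rem M t| <= (M.*2)%:R * r ^+ (M.*2).-1 * (pi / 2) ^+ 2.
Proof.
move=> M0; wlog t0 : t / 0 <= t => [W t_itv tr|t_itv tr].
  have [t0|t_lt0] := lerP 0 t; first exact: W.
  have Nt_itv : -1 <= - t <= 1 by rewrite lerNr opprK lerNl andbC.
  by rewrite -normrN -asin_remN //; apply: W; rewrite ?normrN // oppr_ge0 ltW.
have t_itv' : t \in `[-1, 1] by rewrite in_itv.
have acos_itv : 0 <= acos t <= pi / 2 by rewrite acos_ge0 // acos_le_pihalf //; lra.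
have := asin_rem_cos_bounds (r := r) M0 acos_itv; rewrite acosK //.
by rewrite -{1}(ger0_norm t0) => /(_ tr) /andP[rem0 rem_le]; rewrite ger0_norm.
Qed.

Lemma acos_kernel_expansion (M : nat) (t : R) :
  (t + 1) * (pi - acos t) = pi / 2 * (1 + t)
    + \sum_(m < M) asin_coef m * (t ^+ m.*2.+1 + t ^+ m.*2.+2)
    + (t + 1) * asin_rem M t.
Proof.
have -> : \sum_(m < M) asin_coef m * (t ^+ m.*2.+1 + t ^+ m.*2.+2) =
    (t + 1) * asin_poly M t.
  rewrite /asin_poly mulr_sumr; apply: eq_bigr => m _.
  by rewrite [t ^+ m.*2.+2]exprS; ring.
by rewrite /asin_rem; field.
Qed.

End ArcsinTaylor.

Arguments asin_coef {R} m.

Section GeometricDecay.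
Variable R : archiRealFieldType.

Lemma bernoulli_ineq (h : R) (k : nat) : 0 <= h -> 1 + k%:R * h <= (1 + h) ^+ k.
Proof.
move=> h0; elim: k => [|k IH]; first by rewrite mul0r addr0 expr0.
have kh0 : 0 <= k%:R * h by rewrite mulr_ge0.
by rewrite exprS -natr1; nra.
Qed.

Lemma exists_natmul_exp_small (r eps : R) (N : nat) : 0 <= r < 1 -> 0 < eps ->
  exists2 M : nat, (N < M)%N & M%:R * r ^+ (M.*2).-1 <= eps.
Proof.
move=> /andP[r0 r1] eps0; have [->|r_neq0] := eqVneq r 0.
  by exists N.+1; rewrite // doubleS /= expr0n /= mulr0 ltW.
have r_gt0 : 0 < r by rewrite lt_def r_neq0.
pose h := r^-1 - 1.
have h_gt0 : 0 < h by rewrite subr_gt0 invf_gt1.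
have r_h : r * (1 + h) = 1 by rewrite addrC subrK divff.
(* with [M = 2K]: [r ^ K * (1 + K h) <= 1], so [2K r^(4K-1) <= 2K r^(2K) <= 2 / (K h^2)] *)
pose K := maxn N.+1 (Num.bound (2 / (eps * h ^+ 2))).
have N_lt_K : (N < K)%N by rewrite leq_max leqnn.
have K_gt0 : 0 < K%:R :> R by rewrite ltr0n (leq_ltn_trans _ N_lt_K).
have K_large : 2 <= K%:R * (eps * h ^+ 2).
  rewrite -ler_pdivrMr ?mulr_gt0 ?exprn_gt0 //; apply/ltW/(lt_le_trans (archi_boundP _)).
    by rewrite divr_ge0 // ltW // mulr_gt0 // exprn_gt0.
  by rewrite ler_nat leq_max leqnn orbT.
exists K.*2; first by rewrite -addnn (leq_trans N_lt_K) // leq_addr.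
have a0 : 0 <= r ^+ K by rewrite exprn_ge0.
have aKh : r ^+ K * (K%:R * h) <= 1.
  have := ler_wpM2l a0 (bernoulli_ineq K (ltW h_gt0)).
  by rewrite -exprMn r_h expr1n; nra.
have r_exp : r ^+ (K.*2).*2.-1 <= (r ^+ K) ^+ 2.
  rewrite -exprM; apply: ler_wiXn2l => //; [exact: ltW | rewrite -!muln2; lia].
apply: le_trans (ler_wpM2l (ler0n R (K.*2)) r_exp) _.
rewrite -mul2n natrM; apply: le_trans (_ : _ <= eps * (r ^+ K * (K%:R * h)) ^+ 2) _.
  have : 0 <= K%:R * (r ^+ K) ^+ 2 by rewrite mulr_ge0 // exprn_ge0.
  by rewrite !exprMn; nra.
by rewrite -[X in _ <= X]mulr1 ler_pM2l // expr_le1 // !mulr_ge0 // ltW.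
Qed.

End GeometricDecay.

Lemma finite_norm_lt1_bound (R : realDomainType) (T : finType) (f : T -> R)
    (P : pred T) :
  (forall q, P q -> `|f q| < 1) -> exists2 r, 0 <= r < 1 & forall q, P q -> `|f q| <= r.
Proof.
move=> f_lt1; exists (\big[Num.max/0]_(q | P q) `|f q|).
  elim/big_ind: _ => [|a b /andP[a0 a1] /andP[b0 b1]|q /f_lt1 fq_lt1].
  - by rewrite lexx ltr01.
  - by rewrite le_max a0 gt_max a1 b1.
  - by rewrite normr_ge0 fq_lt1.
by move=> q Pq; rewrite (bigD1 q) //= le_max lexx.
Qed.

Section Positivity.
Variables (R : realType) (n d : nat) (x : 'I_n -> 'rV[R]_d).

Lemma quad_Hinf_expansion (w : 'I_n -> R) (M : nat) :
  4 * pi * (\sum_i \sum_j w i * w j * Hinf x i j) =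
  pi / 2 * (gram_pow_form x w 0 + gram_pow_form x w 1)
  + \sum_(m < M) asin_coef m * (gram_pow_form x w m.*2.+1 + gram_pow_form x w m.*2.+2)
  + \sum_i \sum_j w i * w j *
      ((dotv (x i) (x j) + 1) * asin_rem M (dotv (x i) (x j))).
Proof.
have entry i j : 4 * pi * Hinf x i j =
    (dotv (x i) (x j) + 1) * (pi - acos (dotv (x i) (x j))).
  by rewrite mxE mulrC divfK // mulf_neq0 ?pnatr_eq0 // gt_eqF ?pi_gt0.
rewrite mulr_sumr; under eq_bigr do rewrite mulr_sumr.
under eq_bigr do under eq_bigr do rewrite mulrCA entry (acos_kernel_expansion M) 2!mulrDr.
under eq_bigr do rewrite !big_split /=.
rewrite !big_split /= /gram_pow_form; congr (_ + _ + _).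
  rewrite -big_split mulr_sumr; apply: eq_bigr => i _.
  by rewrite -big_split mulr_sumr; apply: eq_bigr => j _; rewrite expr0 expr1 /=; ring.
apply/esym; under eq_bigr do rewrite -big_split mulr_sumr.
rewrite exchange_big; apply: eq_bigr => i _ /=.
under eq_bigr do rewrite -big_split mulr_sumr.
rewrite exchange_big; apply: eq_bigr => j _ /=.
by rewrite mulr_sumr; apply: eq_bigr => m _; ring.
Qed.

Hypotheses (x_sphere : forall i, on_sphere (x i)) (x_inj : injective x).

Lemma sphere_dotv_neq1 i j : i != j -> dotv (x i) (x j) != 1.
Proof.
by move=> ij; apply: contra_neq ij => /(sphere_dotv_eq1 (x_sphere i) (x_sphere j)) /x_inj.
Qed.

Lemma sphere_dotv_offdiag_bound : exists2 r, 0 <= r < 1 &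
  forall i j, i != j -> dotv (x i) (x j) != -1 -> `|dotv (x i) (x j)| <= r.
Proof.
pose P := [pred q : 'I_n * 'I_n | (q.1 != q.2) && (dotv (x q.1) (x q.2) != -1)].
have [|r r01 r_bound] := @finite_norm_lt1_bound R _ (fun q => dotv (x q.1) (x q.2)) P.
  move=> [i j] /andP[/= ij t_neqN1]; rewrite ltr_norml.
  have /andP[t_ge t_le] := sphere_dotv_bound (x_sphere i) (x_sphere j).
  by rewrite !lt_def t_ge t_le t_neqN1 eq_sym sphere_dotv_neq1.
by exists r => // i j ij t_neqN1; apply: (r_bound (i, j)); rewrite /= ij t_neqN1.
Qed.

Lemma gram_pow_form_pos (w : 'I_n -> R) (j : 'I_n) : w j != 0 ->
  exists2 k, (0 < k)%N & 0 < gram_pow_form x w k.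
Proof.
move=> wj0; apply: contrapT => no_pos; move/eqP: wj0; apply.
apply: (@power_sums_eq0 _ _ (fun i => dotv (x j) (x i))).
- by rewrite x_sphere oner_neq0.
- by move=> i ij; rewrite x_sphere sphere_dotv_neq1 // eq_sym.
move=> k k_gt0; apply: gram_pow_form_eq0; apply/eqP.
rewrite eq_le gram_pow_form_ge0 andbT leNgt; apply/negP => Pk_gt0.
by apply: no_pos; exists k.
Qed.

Lemma quad_asin_rem_ge (w : 'I_n -> R) (M : nat) (r : R) : (0 < M)%N -> 0 <= r ->
  (forall i j, i != j -> dotv (x i) (x j) != -1 -> `|dotv (x i) (x j)| <= r) ->
  - ((M.*2)%:R * r ^+ (M.*2).-1 * (pi / 2) ^+ 2 * 2 * \sum_i \sum_j `|w i| * `|w j|)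
  <= \sum_i \sum_j w i * w j *
       ((dotv (x i) (x j) + 1) * asin_rem M (dotv (x i) (x j))).
Proof.
move=> M0 r0 r_bound.
set B := _ * (pi / 2) ^+ 2.
have B0 : 0 <= B by rewrite /B mulr_ge0 ?sqr_ge0 // mulr_ge0 ?exprn_ge0.
rewrite mulr_sumr -sumrN; apply: ler_sum => i _.
rewrite mulr_sumr -sumrN; apply: ler_sum => j _.
have ww0 : 0 <= B * 2 * (`|w i| * `|w j|).
  by apply: mulr_ge0; [apply: mulr_ge0 | apply: mulr_ge0].
case: (eqVneq i j) ww0 => [<-|ij] ww0.
  rewrite [dotv _ _]x_sphere; apply: le_trans (_ : _ <= 0) _; first by rewrite oppr_le0.
  by rewrite -expr2 mulr_ge0 ?sqr_ge0 // mulr_ge0 ?asin_rem1_ge0.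
have [->|t_neqN1] := eqVneq (dotv (x i) (x j)) (-1).
  by rewrite addNr mul0r mulr0 oppr_le0.
have /andP[t_ge t_le] := sphere_dotv_bound (x_sphere i) (x_sphere j).
rewrite lerNl; apply: le_trans (ler_norm _) _.
rewrite normrN !normrM [X in _ <= X]mulrC ler_wpM2l ?mulr_ge0 // mulrC.
apply: ler_pM => //; first by apply: asin_rem_bound; rewrite ?t_ge ?r_bound.
by rewrite ger0_norm; lra.
Qed.

Lemma gram_pow_form_pair_pos (w : 'I_n -> R) (j : 'I_n) : w j != 0 ->
  exists m, 0 < gram_pow_form x w m.*2.+1 + gram_pow_form x w m.*2.+2.
Proof.
move=> wj0; have [k k_gt0 Pk_gt0] := gram_pow_form_pos wj0.
exists k.-1./2.
have := gram_pow_form_ge0 x w (k.-1./2).*2.+1.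
have := gram_pow_form_ge0 x w (k.-1./2).*2.+2.
have [] : k = (k.-1./2).*2.+1 \/ k = (k.-1./2).*2.+2.
  by have := odd_double_half k.-1; case: odd => /= e; [right|left];
    rewrite -!muln2 in e *; lia.
all: by move=> k_eq; rewrite -k_eq; lra.
Qed.

Lemma quad_Hinf_gt0 (w : 'I_n -> R) (j0 : 'I_n) : w j0 != 0 ->
  0 < \sum_i \sum_j w i * w j * Hinf x i j.
Proof.
move=> wj0; have [m0 pair_gt0] := gram_pow_form_pair_pos wj0.
have delta_gt0 := mulr_gt0 (asin_coef_gt0 R m0) pair_gt0.
set delta := asin_coef m0 * _ in delta_gt0.
have [r r01 r_bound] := sphere_dotv_offdiag_bound.
have r0 : 0 <= r by case/andP: r01.
set S := \sum_i \sum_j `|w i| * `|w j|.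
have S0 : 0 <= S by rewrite sumr_ge0 // => i _; rewrite sumr_ge0 // => i' _.
pose C := 4 * (pi / 2) ^+ 2 * S.
have C0 : 0 <= C by rewrite mulr_ge0 // mulr_ge0 ?sqr_ge0.
have [|M m0_lt_M M_small] := exists_natmul_exp_small m0 r01 (eps := delta / (C + 1)).
  by rewrite divr_gt0 //; lra.
have M_gt0 : (0 < M)%N by apply: leq_ltn_trans m0_lt_M.
have rem_ge := quad_asin_rem_ge w M_gt0 r0 r_bound; rewrite -/S in rem_ge.
have rem_small : M.*2%:R * r ^+ (M.*2).-1 * (pi / 2) ^+ 2 * 2 * S < delta.
  have -> : M.*2%:R * r ^+ (M.*2).-1 * (pi / 2) ^+ 2 * 2 * S =
      C * (M%:R * r ^+ (M.*2).-1) by rewrite /C -mul2n natrM; ring.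
  apply: le_lt_trans (ler_wpM2l C0 M_small) _.
  by rewrite mulrA ltr_pdivrMr; nra.
have head_ge0 : 0 <= pi / 2 * (gram_pow_form x w 0 + gram_pow_form x w 1).
  by rewrite mulr_ge0 ?addr_ge0 ?gram_pow_form_ge0 // divr_ge0 // ltW // pi_gt0.
have tail_ge : delta <=
    \sum_(m < M) asin_coef m * (gram_pow_form x w m.*2.+1 + gram_pow_form x w m.*2.+2).
  rewrite (bigD1 (Ordinal m0_lt_M)) //= lerDl sumr_ge0 // => m _.
  by rewrite mulr_ge0 ?addr_ge0 ?gram_pow_form_ge0 // ltW // asin_coef_gt0.
have : 0 < 4 * pi * (\sum_i \sum_j w i * w j * Hinf x i j).
  by rewrite (quad_Hinf_expansion w M); lra.
by rewrite pmulr_rgt0 // mulr_gt0 // pi_gt0.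
Qed.

End Positivity.

Theorem proposition1 (R : realType) (n d : nat) (x : 'I_n -> 'rV[R]_d) :
  (2 <= d)%N ->
  (forall i, on_sphere (x i)) ->
  injective x ->
  symmetric_mx (Hinf x) /\ posdef_mx (Hinf x).
Proof.
move=> _ x_sphere x_inj; split; first by apply/matrixP => i j; rewrite !mxE dotvC.
move=> v /cV0Pn [j vj0]; rewrite quad_formE.
exact: (quad_Hinf_gt0 x_sphere x_inj (w := fun i => v i 0) vj0).
Qed.
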